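(* There exist a Fuchsian group $\Gamma$ and two subsets $F_1, F_2 \subset \mathbb{H}$, each of which is a fundamental domain of $\Gamma$ in the following sense, such that $\mu(F_1) \neq \mu(F_2)$. A subset $F \subset \mathbb{H}$ is a fundamental domain of $\Gamma$ (in this sense) if: (i$'$) $F$ is open and connected; (ii) no two distinct points of $F$ are equivalent under $\Gamma$; (iii) for every $z \in \mathbb{H}$ there exists some $M \in \Gamma$ such that $Mz \in \overline{F}$, where $\overline{F}$ denotes the closure of $F$ in $\mathbb{H}$.
   Context: $\mathbb{H} = \{ z \in \mathbb{C} : \mathrm{Im}\, z > 0\}$ is the upper half-plane. A Fuchsian group is a discrete subgroup $\Gamma$ of $\mathrm{PSL}_2(\mathbb{R})$, acting on $\mathbb{H}$ by $z \mapsto Mz = \frac{az+b}{cz+d}$ for $M = \pm\begin{pmatrix} a & b \\ c & d\end{pmatrix}$. Two points $z, w \in \mathbb{H}$ are equivalent under $\Gamma$ if $w = Mz$ for some $M \in \Gamma$. $\mu$ denotes the hyperbolic area measure on $\mathbb{H}$, $d\mu = y^{-2}\,dx\,dy$ (for $z = x+iy$). *)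

From HB Require Import structures.
From mathcomp Require Import all_boot all_order all_algebra.
From mathcomp Require Import all_classical all_reals all_analysis.
Set Implicit Arguments. Unset Strict Implicit. Unset Printing Implicit Defensive.
Import Order.TTheory GRing.Theory Num.Theory.
Import numFieldNormedType.Exports.
Local Open Scope classical_set_scope.
Local Open Scope ring_scope.

Section Hyperbolic.
Variable R : realType.

(* The upper half-plane, points z = x + i y encoded as pairs (x, y). *)
Definition upper_half_plane : set (R * R) := [set z | 0 < z.2].

(* Moebius action z |-> (a z + b)/(c z + d) of a real 2x2 matrix
   [[a, b], [c, d]], written out in real and imaginary parts:
   (a z + b)/(c z + d) = (a z + b)(c zbar + d) / |c z + d|^2. *)
Definition mob (M : 'M[R]_2) (z : R * R) : R * R :=
  let a := M 0 0 in let b := M 0 1 in let c := M 1 0 in let d := M 1 1 in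
  let x := z.1 in let y := z.2 in
  let D := (c * x + d) ^+ 2 + (c * y) ^+ 2 in
  ((a * c * (x ^+ 2 + y ^+ 2) + (a * d + b * c) * x + b * d) / D,
   (a * d - b * c) * y / D).

(* A subgroup of SL_2(R) containing -1, i.e. the full preimage of a subgroup
   of PSL_2(R) = SL_2(R)/{+-1}. *)
Definition SL2_subgroup_pm (G : set 'M[R]_2) : Prop :=
  [/\ forall M, G M -> \det M = 1,
      G 1%:M, G (- 1%:M),
      (forall M N, G M -> G N -> G (M *m N)) &
      (forall M, G M -> G (invmx M))].

(* Discreteness (entrywise topology on 2x2 matrices, i.e. that of R^4). *)
Definition discrete_mx (G : set 'M[R]_2) : Prop :=
  forall M, G M -> exists2 e : R, 0 < e &
    forall N, G N -> (forall i j, `|N i j - M i j| < e) -> N = M.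

Definition fuchsian (G : set 'M[R]_2) : Prop :=
  SL2_subgroup_pm G /\ discrete_mx G.

Definition fundamental_domain (G : set 'M[R]_2) (F : set (R * R)) : Prop :=
  [/\ F `<=` upper_half_plane,
      open F /\ connected F,
      (forall z w, F z -> F w -> forall M, G M -> mob M z = w -> z = w) &
      (forall z, upper_half_plane z ->
         exists2 M, G M & (closure F `&` upper_half_plane) (mob M z))].

Definition hyp_area (A : set (R * R)) : \bar R :=
  (\int[(@lebesgue_measure R) \x (@lebesgue_measure R)]_(z in A)
     ((z.2 ^+ 2)^-1)%:E)%E.

End Hyperbolic.

(* The trivial group {1, -1} is Fuchsian and identifies no two points, so any
   open connected subset of H that is dense in H is a fundamental domain for
   it.  H itself is one, of infinite hyperbolic area (area >= 2 suffices).
   Another is a comb: to the n-th point (p, q) of H with rational coordinates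
   attach a tooth of area <= 2^-(n+1), made of a thin vertical rectangle
   through (p, q) and (p, 1) and a thin horizontal strip at height 1 from
   (p, 1) to (0, 1).  The comb is open, connected through (0, 1), dense in H,
   and has area <= 1. *)

From HB Require Import structures.
From mathcomp Require Import all_boot all_order all_algebra.
From mathcomp Require Import all_classical all_reals all_analysis.
From mathcomp Require Import measurable_realfun.
From mathcomp Require Import ring lra.
From mathcomp Require Import Rstruct.

Set Implicit Arguments. Unset Strict Implicit. Unset Printing Implicit Defensive.
Import Order.TTheory GRing.Theory Num.Theory.
Import numFieldNormedType.Exports.
Local Open Scope classical_set_scope.
Local Open Scope ring_scope.

Section trivial_group.
Variable R : realType.

Definition pm1 : set 'M[R]_2 := [set M | M = 1%:M \/ M = - 1%:M].

Lemma mob_scalar (a : R) z : a != 0 -> mob a%:M z = z.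
Proof.
case: z => x y a0; rewrite /mob !mxE /= !(mulr1n, mulr0n, mulr0, mul0r, addr0, subr0).
rewrite !add0r expr0n addr0 -expr2.
by congr (_, _); field.
Qed.

Let oppr_scalar_mx1 : - 1%:M = (-1)%:M :> 'M[R]_2.
Proof. by rewrite raddfN. Qed.

Lemma mob_pm1 M z : pm1 M -> mob M z = z.
Proof.
by case=> ->; [|rewrite oppr_scalar_mx1]; apply: mob_scalar; rewrite ?oppr_eq0 oner_eq0.
Qed.

Lemma fuchsian_pm1 : fuchsian pm1.
Proof.
split; first split.
- by move=> M [->|->]; rewrite ?oppr_scalar_mx1 det_scalar ?expr1n // sqrrN expr1n.
- by left.
- by right.
- move=> M N [->|->] [->|->]; rewrite ?mul1mx ?mulNmx ?mul1mx ?opprK.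
  + by left.
  + by right.
  + by right.
  + by left.
- move=> M [->|->]; rewrite ?oppr_scalar_mx1 invmx_scalar ?invrN invr1.
    by left.
  by right; rewrite oppr_scalar_mx1.
move=> M pm1M; exists 1 => // N pm1N.
case: pm1M pm1N => -> [->|->] // /(_ 0 0); rewrite !mxE /= mulr1n ltr_norml.
  by move=> /andP[? ?]; exfalso; lra.
by move=> /andP[? ?]; exfalso; lra.
Qed.

Lemma pm1_fundamental_domain (F : set (R * R)) :
  F `<=` @upper_half_plane R -> open F -> connected F ->
  @upper_half_plane R `<=` closure F -> fundamental_domain pm1 F.
Proof.
move=> FH oF cF HF; split => // [z w _ _ M /mob_pm1 -> //|z Hz].
by exists 1%:M; [left|rewrite mob_pm1; [split => //; exact: HF|left]].
Qed.

End trivial_group.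

Section product_topology.
Variables T U : topologicalType.

Lemma open_setX (A : set T) (B : set U) : open A -> open B -> open (A `*` B).
Proof.
move=> oA oB; rewrite openE => -[a b] [/= Aa Bb].
by exists (A, B) => //=; split; exact: open_nbhs_nbhs.
Qed.

Lemma connected_setX (A : set T) (B : set U) :
  connected A -> connected B -> connected (A `*` B).
Proof.
move=> cA cB.
have [->|/set0P[a0 Aa0]] := eqVneq A set0; first by rewrite set0X; exact: connected0.
have [->|/set0P[b0 Bb0]] := eqVneq B set0; first by rewrite setX0; exact: connected0.
(* A union of crosses ({a} x B) u (A x {b0}), all through (a0, b0). *)
have -> : A `*` B = \bigcup_(a in A) ((pair a) @` B `|` (pair^~ b0) @` A).
  apply/seteqP; split => [[a b] [/= Aa Bb]|[a b] [a' Aa' [[b' Bb' [<- <-]]|]]] //.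
    by exists a => //; left; exists b.
  by move=> [a'' Aa'' [<- <-]].
apply: bigcup_connected; first by exists (a0, b0) => a Aa; right; exists a0.
move=> a Aa; apply: connectedU.
- by exists (a, b0); split; [exists b0|exists a].
- apply: connected_continuous_connected => //; apply: continuous_subspaceT => b.
  exact: (cvg_pair (cvg_cst a) cvg_id).
- apply: connected_continuous_connected => //; apply: continuous_subspaceT => a'.
  exact: (cvg_pair cvg_id (cvg_cst b0)).
Qed.

End product_topology.

Lemma connected_itv (R : realType) (i : interval R) : connected [set` i].
Proof. by apply/connected_intervalP; exact: interval_is_interval. Qed.

Section hyperbolic_area.
Variable R : realType.
Local Notation T := (measurableTypeR R * measurableTypeR R)%type.
Local Notation lebesgue2 := ((@lebesgue_measure R) \x (@lebesgue_measure R))%E.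

Lemma measurable_inv : measurable_fun [set: R] (@GRing.inv R).
Proof.
have -> : [set: R] = [set x | x != 0] `|` [set 0].
  by apply/seteqP; split => x //= _; case: (eqVneq x 0); [right|left].
apply/measurable_funU; [by apply: open_measurable; exact: open_neq|exact: measurable_set1|].
split; last exact: measurable_fun_set1.
apply: open_continuous_measurable_fun; first exact: open_neq.
by move=> x; rewrite inE => x0; exact: continuousV.
Qed.

Lemma measurable_hyp_density :
  measurable_fun [set: T] (fun z : T => ((z.2 ^+ 2)^-1)%:E).
Proof.
apply/measurable_EFinP; apply: measurableT_comp; first exact: measurable_inv.
by apply: measurable_funX; exact: measurable_snd.
Qed.

(* An alias of [hyp_area] on the product measurable space, carrying its
   measure instance. *)
Definition hyp_measure : set T -> \bar R := @hyp_area R.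

Let hyp_measure0 : hyp_measure set0 = 0%E.
Proof. exact: integral_set0. Qed.

Let hyp_measure_ge0 (A : set T) : (0 <= hyp_measure A)%E.
Proof. by apply: integral_ge0 => z _; rewrite lee_fin invr_ge0 sqr_ge0. Qed.

Let hyp_measure_semi_sigma_additive : semi_sigma_additive hyp_measure.
Proof.
apply: semi_sigma_additive_nng_induced; first exact: measurable_hyp_density.
by move=> z; rewrite lee_fin invr_ge0 sqr_ge0.
Qed.

HB.instance Definition _ := isMeasure.Build _ T R hyp_measure
  hyp_measure0 hyp_measure_ge0 hyp_measure_semi_sigma_additive.

Definition rect (a b c d : R) : set (R * R) := `]a, b[ `*` `]c, d[.

Lemma rectP a b c d x y : rect a b c d (x, y) <-> a < x < b /\ c < y < d.
Proof. by rewrite /rect /= !in_itv. Qed.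

Lemma measurable_rect a b c d : measurable (rect a b c d : set T).
Proof. by apply: measurableX; exact: measurable_itv. Qed.

Lemma open_rect a b c d : open (rect a b c d).
Proof. by apply: open_setX; exact: interval_open. Qed.

Lemma connected_rect a b c d : connected (rect a b c d).
Proof. by apply: connected_setX; exact: connected_itv. Qed.

Lemma rect_upper_half_plane a b c d : 0 <= c -> rect a b c d `<=` @upper_half_plane R.
Proof. by move=> c0 [x y] [_ /=]; rewrite in_itv /= => /andP[/(le_lt_trans c0)]. Qed.

Lemma lebesgue2_rect a b c d : a < b -> c < d ->
  lebesgue2 (rect a b c d) = ((b - a) * (d - c))%:E.
Proof.
move=> ab cd; rewrite product_measure1E; try exact: measurable_itv.
have h1 := @lebesgue_measure_itv R `]a, b[; have h2 := @lebesgue_measure_itv R `]c, d[.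
rewrite /= !lte_fin ab cd -!EFinD in h1 h2.
by rewrite [X in (X * _)%E]h1 [X in (_ * X)%E]h2 -EFinM.
Qed.

Lemma hyp_area_rect_le a b c d : 0 < c -> a < b -> c < d ->
  (hyp_area (rect a b c d) <= ((b - a) * (d - c) / c ^+ 2)%:E)%E.
Proof.
move=> c0 ab cd.
rewrite mulrC EFinM -lebesgue2_rect // -integral_cst; last exact: measurable_rect.
apply: ge0_le_integral; first exact: measurable_rect.
- by move=> z _; rewrite lee_fin invr_ge0 sqr_ge0.
- exact: measurable_funTS measurable_hyp_density.
- exact: measurable_cst.
move=> [x y] [_ /=]; rewrite in_itv /= => /andP[cy _].
have y0 : 0 < y := lt_trans c0 cy.
by rewrite lee_fin lef_pV2 ?posrE ?exprn_gt0 // ler_pXn2r ?nnegrE ?ltW.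
Qed.

Lemma hyp_area_rect_ge a b c d : 0 < c -> a < b -> c < d ->
  (((b - a) * (d - c) / d ^+ 2)%:E <= hyp_area (rect a b c d))%E.
Proof.
move=> c0 ab cd.
rewrite mulrC EFinM -lebesgue2_rect // -integral_cst; last exact: measurable_rect.
apply: ge0_le_integral; first exact: measurable_rect.
- by move=> z _; rewrite lee_fin invr_ge0 sqr_ge0.
- exact: measurable_cst.
- exact: measurable_funTS measurable_hyp_density.
move=> [x y] [_ /=]; rewrite in_itv /= => /andP[cy yd].
have y0 : 0 < y := lt_trans c0 cy.
have d0 : 0 < d := lt_trans y0 yd.
by rewrite lee_fin lef_pV2 ?posrE ?exprn_gt0 // ler_pXn2r ?nnegrE ?ltW.
Qed.

Lemma upper_half_planeE : @upper_half_plane R = [set: R] `*` `]0, +oo[.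
Proof.
by apply/seteqP; split => -[x y]; rewrite /upper_half_plane /= in_itv /= andbT => //= -[].
Qed.

Lemma measurable_upper_half_plane : measurable (@upper_half_plane R : set T).
Proof. by rewrite upper_half_planeE; apply: measurableX => //; exact: measurable_itv. Qed.

Lemma open_upper_half_plane : open (@upper_half_plane R).
Proof.
by rewrite upper_half_planeE; apply: open_setX; [exact: openT|exact: interval_open].
Qed.

Lemma connected_upper_half_plane : connected (@upper_half_plane R).
Proof.
by rewrite upper_half_planeE -set_itvE; apply: connected_setX; exact: connected_itv.
Qed.

Lemma hyp_area_upper_half_plane_ge2 : (2%:E <= hyp_area (@upper_half_plane R))%E.
Proof.
have rectH : rect 0 4 (1 / 2) 1 `<=` @upper_half_plane R by apply: rect_upper_half_plane.
apply: (le_trans _ (le_measure hyp_measure _ _ rectH)).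
- by apply: le_trans (hyp_area_rect_ge _ _ _); rewrite ?lee_fin; lra.
- exact: (mem_set (measurable_rect _ _ _ _)).
- exact: (mem_set measurable_upper_half_plane).
Qed.

End hyperbolic_area.

Section teeth.
Variable R : realType.
Local Notation T := (measurableTypeR R * measurableTypeR R)%type.

(* Widths chosen so that [hyp_area_rect_le] bounds the area by [e]; for
   [hstrip] this uses the floor 1 - h >= 1/2. *)
Definition vstrip (p c d e : R) : set (R * R) :=
  let w := e * c ^+ 2 / (2 * (d - c)) in rect (p - w) (p + w) c d.

Definition hstrip (L e : R) : set (R * R) :=
  let h := e / (16 * L) in rect (- L) L (1 - h) (1 + h).

Lemma hyp_area_vstrip (p c d e : R) : 0 < c -> c < d -> 0 < e ->
  (hyp_area (vstrip p c d e) <= e%:E)%E.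
Proof.
move=> c0 cd e0; rewrite /vstrip; set w := _ / _.
have w0 : 0 < w by rewrite divr_gt0 ?mulr_gt0 ?exprn_gt0 // subr_gt0.
apply: le_trans (hyp_area_rect_le c0 _ cd) _; first lra.
have -> : (p + w - (p - w)) * (d - c) / c ^+ 2 = e.
  by rewrite /w; field; apply/andP; split; apply/negP => /eqP; lra.
exact: lexx.
Qed.

Lemma hyp_area_hstrip (L e : R) : 1 <= L -> 0 < e -> e <= 1 ->
  (hyp_area (hstrip L e) <= e%:E)%E.
Proof.
move=> L1 e0 e1; rewrite /hstrip; set h := _ / _.
have hL : 16 * L * h = e by rewrite /h mulrC divfK // gt_eqF //; lra.
have h0 : 0 < h by rewrite divr_gt0 //; lra.
have h1 : h <= 1 / 16 by nra.
apply: le_trans (hyp_area_rect_le _ _ _) _; [lra|lra|lra|].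
by rewrite lee_fin ler_pdivrMr ?exprn_gt0; nra.
Qed.

Lemma vstrip_axis (p c d e y : R) : 0 < c -> c < y < d -> 0 < e ->
  vstrip p c d e (p, y).
Proof.
move=> c0 /andP[cy yd] e0; apply/rectP; split; last exact/andP.
have cd : c < d := lt_trans cy yd.
have : 0 < e * c ^+ 2 / (2 * (d - c)) by rewrite divr_gt0 ?mulr_gt0 ?exprn_gt0 // subr_gt0.
by move=> w0; apply/andP; split; lra.
Qed.

Lemma hstrip_axis (L e x : R) : 0 < e -> - L < x < L -> hstrip L e (x, 1).
Proof.
move=> e0 /andP[Lx xL]; apply/rectP; split; first exact/andP.
have : 0 < e / (16 * L) by rewrite divr_gt0 // mulr_gt0 //; lra.
by move=> h0; apply/andP; split; lra.
Qed.

Definition tooth (p q e : R) : set (R * R) :=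
  vstrip p (q / (q + 2)) (q + 2) (e / 2) `|` hstrip (p ^+ 2 + 1) (e / 2).

Lemma tooth_bottom_bounds (q : R) : 0 < q ->
  [/\ 0 < q / (q + 2), q / (q + 2) < q & q / (q + 2) < 1].
Proof.
move=> q0; have q2 : 0 < q + 2 by lra.
by split; [exact: divr_gt0|rewrite ltr_pdivrMr //; nra|rewrite ltr_pdivrMr //; lra].
Qed.

Lemma sqr_add1_bounds (p : R) : - (p ^+ 2 + 1) < p < p ^+ 2 + 1.
Proof.
have := sqr_ge0 (p - 1 / 2); have := sqr_ge0 (p + 1 / 2).
by rewrite !sqrrD !sqrrN; move=> ? ?; apply/andP; split; nra.
Qed.

Lemma tooth_upper_half_plane (p q e : R) : 0 < q -> e <= 1 ->
  tooth p q e `<=` @upper_half_plane R.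
Proof.
move=> /tooth_bottom_bounds[c0 _ _] e1; rewrite subUset; split.
  exact/rect_upper_half_plane/ltW.
apply: rect_upper_half_plane.
have : e / 2 / (16 * (p ^+ 2 + 1)) <= 1 by rewrite ler_pdivrMr; nra.
lra.
Qed.

Lemma measurable_tooth (p q e : R) : measurable (tooth p q e : set T).
Proof. by apply: measurableU; exact: measurable_rect. Qed.

Lemma open_tooth (p q e : R) : open (tooth p q e).
Proof. by apply: openU; exact: open_rect. Qed.

Lemma hyp_area_tooth (p q e : R) : 0 < q -> 0 < e -> e <= 1 ->
  (hyp_area (tooth p q e) <= e%:E)%E.
Proof.
move=> /tooth_bottom_bounds[c0 cq _] e0 e1.
rewrite /tooth; apply: le_trans (measureU2 (@hyp_measure R) _ _) _;
  try exact: measurable_rect.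
rewrite [e in e%:E]splitr EFinD; apply: leeD.
  by apply: hyp_area_vstrip => //; lra.
by apply: hyp_area_hstrip; nra.
Qed.

Lemma tooth_tip (p q e : R) : 0 < q -> 0 < e -> tooth p q e (p, q).
Proof.
move=> q0 e0; have [c0 cq _] := tooth_bottom_bounds q0; left.
by apply: vstrip_axis => //; [apply/andP; split|]; lra.
Qed.

Lemma tooth_base (p q e : R) : 0 < e -> tooth p q e (0, 1).
Proof.
move=> e0; right; have p2 := sqr_ge0 p.
by apply: hstrip_axis; [|apply/andP; split]; nra.
Qed.

Lemma connected_tooth (p q e : R) : 0 < q -> 0 < e -> connected (tooth p q e).
Proof.
move=> q0 e0; have [c0 _ c1] := tooth_bottom_bounds q0; apply: connectedU; last first.
- exact: connected_rect.
- exact: connected_rect.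
exists (p, 1); split.
  by apply: vstrip_axis => //; [apply/andP; split|]; lra.
apply: hstrip_axis; [lra|exact: sqr_add1_bounds].
Qed.

End teeth.

Section comb.
Variable R : realType.

(* Enumerates the rational points of the upper half-plane; non-positive
   heights are replaced by 1. *)
Definition rat_point (n : nat) : R * R :=
  if @unpickle (rat * rat)%type n is Some (a, b)
  then (ratr a, if 0 < ratr b :> R then ratr b else 1)
  else (0, 1).

Lemma rat_point_gt0 n : 0 < (rat_point n).2.
Proof. by rewrite /rat_point; case: unpickle => [[a b]|] //=; case: ifP. Qed.

Lemma rat_point_dense (x y e : R) : 0 < y -> 0 < e ->
  exists n, `|(rat_point n).1 - x| < e /\ `|(rat_point n).2 - y| < e.
Proof.
move=> y0 e0.
have [a] : exists a : rat, ratr a \in `]x - e, x + e[ by apply: rat_in_itvoo; lra.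
rewrite in_itv /= => /andP[xa ax].
have [b] : exists b : rat, ratr b \in `]Num.max 0 (y - e), y[.
  by apply: rat_in_itvoo; rewrite gt_max; apply/andP; split; lra.
rewrite in_itv /= gt_max => /andP[/andP[b0 yeb] bly].
exists (pickle (a, b)); rewrite /rat_point pickleK /= b0.
by split; rewrite ltr_norml; apply/andP; split; lra.
Qed.

Definition comb : set (R * R) :=
  \bigcup_n tooth (rat_point n).1 (rat_point n).2 (1 / (2 ^ n.+1)%:R).

Let eps_gt0 n : 0 < 1 / (2 ^ n.+1)%:R :> R.
Proof. by rewrite divr_gt0 // ltr0n expn_gt0. Qed.

Let eps_le1 n : 1 / (2 ^ n.+1)%:R <= 1 :> R.
Proof. by rewrite ler_pdivrMr ?ltr0n ?expn_gt0 // mul1r ler1n expn_gt0. Qed.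

Lemma comb_upper_half_plane : comb `<=` @upper_half_plane R.
Proof. by move=> z [n _]; apply: tooth_upper_half_plane; [exact: rat_point_gt0|]. Qed.

Lemma open_comb : open comb.
Proof. by apply: bigcup_open => n _; exact: open_tooth. Qed.

Lemma connected_comb : connected comb.
Proof.
apply: bigcup_connected; first by exists (0, 1) => n _; exact: tooth_base.
by move=> n _; apply: connected_tooth; [exact: rat_point_gt0|].
Qed.

Lemma upper_half_plane_closure_comb : @upper_half_plane R `<=` closure comb.
Proof.
move=> [x y] /= y0 B /nbhs_ballP[e /= e0 eB].
have [n [xn yn]] := rat_point_dense x y0 e0.
exists (rat_point n); split; last by apply: eB; split => /=; rewrite /ball /= distrC.
exists n => //; case: (rat_point n) (rat_point_gt0 n) => p q /= q0.
exact: tooth_tip.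
Qed.

Lemma hyp_area_comb : (hyp_area comb <= 1%:E)%E.
Proof.
apply: le_trans (measure_sigma_subadditive (@hyp_measure R)
  (fun n => measurable_tooth _ _ _) _ _) _.
- by apply: bigcupT_measurable => n; exact: measurable_tooth.
- exact: subset_refl.
apply: le_trans (epsilon_trick0 xpredT ler01).
apply: lee_nneseries => [n _ _|n _]; first exact: measure_ge0.
by apply: hyp_area_tooth; [exact: rat_point_gt0| |].
Qed.

End comb.

Theorem proposition1 :
  exists (G : set 'M[Rdefinitions.R]_2) (F1 F2 : set (Rdefinitions.R * Rdefinitions.R)),
    [/\ fuchsian G, fundamental_domain G F1, fundamental_domain G F2 &
        hyp_area F1 <> hyp_area F2].
Proof.
exists (@pm1 _), (@upper_half_plane _), (@comb _); split.
- exact: fuchsian_pm1.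
- apply: pm1_fundamental_domain => //.
  + exact: open_upper_half_plane.
  + exact: connected_upper_half_plane.
  + exact: subset_closure.
- apply: pm1_fundamental_domain.
  + exact: comb_upper_half_plane.
  + exact: open_comb.
  + exact: connected_comb.
  + exact: upper_half_plane_closure_comb.
- move=> area_eq; have := hyp_area_upper_half_plane_ge2 Rdefinitions.R.
  by rewrite area_eq => /le_trans/(_ (hyp_area_comb _)); rewrite lee_fin; lra.
Qed.
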